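(* Let $\Gamma$ act ergodically (and essentially freely, preserving the probability measure) on a standard Borel probability space $(X,\nu)$, and let $\pi:X\to\{0,1\}^{E}$ be a $\Gamma$-equivariant Borel map with $\nu(U^\infty)\neq0$. Then the restriction $\mathcal{R}^{\mathrm{cl}}_{|\infty}$ of the cluster equivalence relation to $U^\infty$ is ergodic (with respect to $\nu$ restricted to $U^\infty$) if and only if $(\nu,\pi)$ has indistinguishable infinite clusters.
   Context: $\Gamma$ is a finitely generated group with finite generating set $S$ (repetitions allowed). Its right Cayley graph $G=(V,E)$ has vertex set $V=\Gamma$ and edge set $E$ indexed by $S\times\Gamma$, the edge $(s,\gamma)$ going from $\gamma$ to $\gamma s$; $\Gamma$ acts on $G$ by left multiplication. Let $o$ be the identity vertex. Elements $\omega\in\{0,1\}^E$ are identified with spanning subgraphs of $G$; the connected components of $\omega$ are its clusters, and $\Gamma$ acts on $\{0,1\}^E$ by $(\gamma\omega)(e)=\omega(\gamma^{-1}e)$. $\mathcal{R}_\Gamma$ is the orbit equivalence relation of the action on $X$. The cluster equivalence subrelation $\mathcal{R}^{\mathrm{cl}}\subseteq\mathcal{R}_\Gamma$ is defined by: $x,y$ are equivalent iff there is $\gamma\in\Gamma$ with $\gamma^{-1}x=y$ and $o,\gamma o$ in the same cluster of $\pi(x)$. $U^\infty$ is the set of $x$ whose $\mathcal{R}^{\mathrm{cl}}$-class is infinite (equivalently, the cluster of $o$ in $\pi(x)$ is infinite). Let $\mathfrak{C}^{\mathrm{cl}}_\infty=\{(x,C):x\in X,\ C\subseteq V \text{ is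 the vertex set of an infinite cluster of }\pi(x)\}$, with $\Gamma$ acting diagonally $\gamma(x,C)=(\gamma x,\gamma C)$ (Borel structure on subsets of $V$ from $\{0,1\}^V$). $(\nu,\pi)$ has indistinguishable infinite clusters if for every $\Gamma$-invariant Borel $\mathcal{A}\subseteq\mathfrak{C}^{\mathrm{cl}}_\infty$, the set of $x\in X$ for which there exist both some $(x,C)\in\mathcal{A}$ and some $(x,C')\in\mathfrak{C}^{\mathrm{cl}}_\infty\setminus\mathcal{A}$ has $\nu$-measure $0$. An equivalence relation is ergodic if every invariant measurable set is null or conull. *)

From HB Require Import structures.
From mathcomp Require Import all_boot all_order all_algebra.
From mathcomp Require Import all_classical all_reals all_analysis.
From Stdlib Require Import Relations.Relation_Operators.

Set Implicit Arguments.
Unset Strict Implicit.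
Unset Printing Implicit Defensive.

Import Order.TTheory GRing.Theory Num.Theory.
Local Open Scope classical_set_scope.

Definition is_group (G : Type) (mul : G -> G -> G) (one : G) (inv : G -> G)
  : Prop :=
  [/\ (forall a b c, mul a (mul b c) = mul (mul a b) c),
      (forall a, mul one a = a), (forall a, mul a one = a),
      (forall a, mul (inv a) a = one) & (forall a, mul a (inv a) = one)].

Definition generates (G : Type) (mul : G -> G -> G) (one : G) (inv : G -> G)
  (k : nat) (s : 'I_k -> G) : Prop :=
  forall g : G, exists l : seq ('I_k * bool),
    g = foldr (fun p acc => mul (if p.2 then s p.1 else inv (s p.1)) acc) one l.

(* Edges are indexed by 'I_k * G; edge (i, g) goes from g to g * s i. *)
Definition config (G : Type) (k : nat) := 'I_k * G -> bool.

Definition open_adj (G : Type) (mul : G -> G -> G) (k : nat) (s : 'I_k -> G)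
  (omega : config G k) (u v : G) : Prop :=
  exists i : 'I_k, (omega (i, u) /\ v = mul u (s i)) \/
                   (omega (i, v) /\ u = mul v (s i)).

Definition connected (G : Type) (mul : G -> G -> G) (k : nat) (s : 'I_k -> G)
  (omega : config G k) : G -> G -> Prop :=
  clos_refl_trans G (open_adj mul s omega).

Definition cluster (G : Type) (mul : G -> G -> G) (k : nat) (s : 'I_k -> G)
  (omega : config G k) (v : G) : set G :=
  [set u | connected mul s omega v u].

Definition config_act (G : Type) (mul : G -> G -> G) (inv : G -> G) (k : nat)
  (g : G) (omega : config G k) : config G k :=
  fun e => omega (e.1, mul (inv g) e.2).

Definition standard_borel (d : measure_display) (X : measurableType d)
  (R : realType) : Prop :=
  exists f : X -> R, [/\ injective f, measurable_fun setT f,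
    measurable (range f) & forall A, measurable A -> measurable (f @` A)].

Section Measures.
Context (d : measure_display) (X : measurableType d) (R : realType).
Context (G : Type) (mul : G -> G -> G) (one : G) (inv : G -> G).

Definition pmp_action (nu : probability X R) (act : G -> X -> X) : Prop :=
  [/\ (forall x, act one x = x),
      (forall g h x, act (mul g h) x = act g (act h x)),
      (forall g, measurable_fun setT (act g)) &
      (forall g A, measurable A -> nu (act g @^-1` A) = nu A)].

Definition essentially_free (nu : probability X R) (act : G -> X -> X) : Prop :=
  nu.-negligible [set x | exists g, g <> one /\ act g x = x].

Definition ergodic_action (nu : probability X R) (act : G -> X -> X) : Prop :=
  forall B : set X, measurable B ->
    (forall g x, B x -> B (act g x)) ->
    (nu B = 0%E \/ nu (~` B) = 0%E).

Context (k : nat) (s : 'I_k -> G).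

(* pi is Borel: each coordinate event {x | pi x e = 1} is measurable,
   i.e. pi is measurable for the product sigma-algebra on {0,1}^E *)
Definition borel_config_map (pi : X -> config G k) : Prop :=
  forall e, measurable [set x | pi x e].

Definition equivariant (act : G -> X -> X) (pi : X -> config G k) : Prop :=
  forall g x, pi (act g x) = config_act mul inv g (pi x).

Definition Rcl (act : G -> X -> X) (pi : X -> config G k) (x y : X) : Prop :=
  exists g, act (inv g) x = y /\ connected mul s (pi x) one g.

Definition Uinf (pi : X -> config G k) : set X :=
  [set x | infinite_set (cluster mul s (pi x) one)].

Definition Rcl_restricted_ergodic (nu : probability X R) (act : G -> X -> X)
  (pi : X -> config G k) : Prop :=
  forall B : set X, measurable B -> B `<=` Uinf pi ->
    (forall x y, B x -> Uinf pi x -> Uinf pi y -> Rcl act pi x y -> B y) ->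
    (nu B = 0%E \/ nu.-negligible (Uinf pi `\` B)).

Definition Cinf (pi : X -> config G k) : set (X * set G) :=
  [set p | exists v, p.2 = cluster mul s (pi p.1) v /\ infinite_set p.2].

(* Borel structure on X * (subsets of G) (subsets identified with {0,1}^G):
   the product sigma-algebra generated by measurable rectangles in X and
   the coordinate events {C | g \in C} *)
Definition pair_gen : set (set (X * set G)) :=
  [set S | (exists A : set X, measurable A /\ S = [set p | A p.1]) \/
           (exists g : G, S = [set p | p.2 g])].

Definition pair_borel (S : set (X * set G)) : Prop := <<s pair_gen >> S.

Definition pair_act (act : G -> X -> X) (g : G) (p : X * set G) : X * set G :=
  (act g p.1, [set mul g c | c in p.2]).

Definition indistinguishable (nu : probability X R) (act : G -> X -> X)
  (pi : X -> config G k) : Prop :=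
  forall A : set (X * set G), A `<=` Cinf pi -> pair_borel A ->
    (forall g p, A p <-> A (pair_act act g p)) ->
    nu.-negligible [set x | (exists C, A (x, C)) /\
                            (exists C', (Cinf pi `\` A) (x, C'))].

End Measures.

From Pilot Require Import Defs.
From HB Require Import structures.
From mathcomp Require Import all_boot all_order all_algebra.
From mathcomp Require Import all_classical all_reals all_analysis.
From Stdlib Require Import Relations.Relation_Operators.

Set Implicit Arguments.
Unset Strict Implicit.
Unset Printing Implicit Defensive.

Local Open Scope classical_set_scope.

(* Re-rooting translates between sets of points and sets of clusters.  A
   Gamma-invariant Borel set A of pairs (x, C) yields the R^cl-invariant set
   B = {x | (x, cluster of o) in A}, and every point carrying both a cluster in
   A and an infinite cluster outside A lies in the saturations Gamma B and
   Gamma (U^inf \ B); as Gamma is countable, one of them is null when R^cl is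
   ergodic on U^inf.  Conversely an R^cl-invariant B in U^inf yields the
   invariant set of clusters C of x such that B holds at x re-rooted at a vertex
   of C; by ergodicity of Gamma the saturation Gamma B is null or conull, and a
   point of U^inf in Gamma B \ B carries clusters on both sides. *)

(* Countability of an index type; [None] values allow empty types. *)
Definition enumerates (I : Type) (e : nat -> option I) : Prop :=
  forall i, exists n, e n = Some i.

Lemma unpickle_enumerates (I : countType) : enumerates (@unpickle I).
Proof. by move=> i; exists (pickle i); rewrite pickleK. Qed.

Lemma generates_enumerable (G : Type) (mul : G -> G -> G) (one : G)
    (inv : G -> G) (k : nat) (s : 'I_k -> G) :
  generates mul one inv s -> exists e : nat -> option G, enumerates e.
Proof.
move=> gen.
pose word_eval (l : seq ('I_k * bool)) :=
  foldr (fun p acc => mul (if p.2 then s p.1 else inv (s p.1)) acc) one l.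
exists (fun n => omap word_eval (unpickle n)) => g.
have [l ->] := gen g; exists (pickle l); by rewrite pickleK.
Qed.

Section EnumerableUnions.
Variables (d : measure_display) (T : measurableType d).
Variables (I : Type) (e : nat -> option I).
Hypothesis e_onto : enumerates e.

Lemma measurable_exists (F : I -> set T) :
  (forall i, measurable (F i)) -> measurable [set x | exists i, F i x].
Proof.
move=> mF.
have -> : [set x | exists i, F i x] =
    \bigcup_n (if e n is Some i then F i else set0).
  apply/seteqP; split => x /=.
  - by case=> i Fix; have [n en] := e_onto i; exists n => //; rewrite en.
  - by case=> n _; case: (e n) => // i; exists i.
by apply: bigcupT_measurable => n; case: (e n).
Qed.

Lemma measurable_forall (F : I -> set T) :
  (forall i, measurable (F i)) -> measurable [set x | forall i, F i x].
Proof.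
move=> mF.
have -> : [set x | forall i, F i x] = ~` [set x | exists i, ~ F i x].
  apply/seteqP; split => x /=; first by move=> Fx [i]; apply.
  by move=> nFx i; apply: contrapT => Fix; apply: nFx; exists i.
by apply/measurableC/measurable_exists => i; exact/measurableC.
Qed.

Lemma negligible_exists (R : realType) (mu : {measure set T -> \bar R}%R)
    (F : I -> set T) :
  (forall i, mu.-negligible (F i)) -> mu.-negligible [set x | exists i, F i x].
Proof.
move=> nF.
have nFe n : mu.-negligible (if e n is Some i then F i else set0).
  by case: (e n) => [i|]; [exact: nF|exact: negligible_set0].
apply: negligibleS (negligible_bigcup nFe).
by move=> x [i Fix]; have [n en] := e_onto i; exists n => //=; rewrite en.
Qed.

End EnumerableUnions.

Lemma measurable_const_prop d (T : measurableType d) (P : Prop) :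
  measurable [set _ : T | P].
Proof.
case: (pselect P) => [p|np].
- by rewrite (_ : [set _ | P] = setT) //; apply/seteqP; split.
- by rewrite (_ : [set _ | P] = set0) //; apply/seteqP; split.
Qed.

Lemma measurable_iff d (T : measurableType d) (P Q : set T) :
  measurable P -> measurable Q -> measurable [set x | P x <-> Q x].
Proof.
move=> mP mQ.
have -> : [set x | P x <-> Q x] = (P `&` Q) `|` (~` P `&` ~` Q).
  apply/seteqP; split => x /=; last by case=> -[Px Qx]; split.
  case: (pselect (P x)) => Px [PQ QP]; [by left; split; last exact: PQ|].
  by right; split => // Qx; apply: Px; exact: QP.
by apply: measurableU; apply: measurableI => //; exact: measurableC.
Qed.

Fixpoint nstep (T I : Type) (r : T -> I -> I -> Prop) (n : nat) (x : T)
    (u v : I) : Prop :=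
  if n is n'.+1 then exists w, nstep r n' x u w /\ r x w v else u = v.

Lemma clos_refl_trans_nstep (T I : Type) (r : T -> I -> I -> Prop) x u v :
  clos_refl_trans I (r x) u v <-> exists n, nstep r n x u v.
Proof.
split.
- elim=> [a b rab|a|a b c _ [m Hm] _ [n Hn]]; [by exists 1, a|by exists 0|].
  exists (n + m); elim: n c Hn => [|n IH] c /=; first by move=> <-.
  by case=> w [Hw rwc]; exists w; split => //; exact: IH.
- case=> n; elim: n v => [|n IH] v /=; first by move=> <-; exact: rt_refl.
  by case=> w [Hw rwv]; apply: rt_trans (IH _ Hw) (rt_step _ _ _ _ rwv).
Qed.

Lemma measurable_clos_refl_trans d (T : measurableType d) (I : Type)
    (e : nat -> option I) (r : T -> I -> I -> Prop) u v :
  enumerates e -> (forall a b, measurable [set x | r x a b]) ->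
  measurable [set x | clos_refl_trans I (r x) u v].
Proof.
move=> e_onto mr.
have -> : [set x | clos_refl_trans I (r x) u v] =
    [set x | exists n, nstep r n x u v].
  by apply/seteqP; split => x /= /clos_refl_trans_nstep.
apply: (measurable_exists (@unpickle_enumerates nat)) => n.
elim: n v => [|n IH] v /=; first exact: measurable_const_prop.
apply: (measurable_exists e_onto) => w.
by apply: measurableI; [exact: IH|exact: mr].
Qed.

Section CayleyGraph.
Variables (G : Type) (mul : G -> G -> G) (one : G) (inv : G -> G).
Hypothesis Ggrp : is_group mul one inv.
Variables (k : nat) (s : 'I_k -> G).

Lemma grp_mulA a b c : mul a (mul b c) = mul (mul a b) c.
Proof. by case: Ggrp. Qed.
Lemma grp_mul1g a : mul one a = a. Proof. by case: Ggrp. Qed.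
Lemma grp_mulg1 a : mul a one = a. Proof. by case: Ggrp. Qed.
Lemma grp_mulVg a : mul (inv a) a = one. Proof. by case: Ggrp. Qed.
Lemma grp_mulgV a : mul a (inv a) = one. Proof. by case: Ggrp. Qed.

Lemma grp_mulKg g a : mul (inv g) (mul g a) = a.
Proof. by rewrite grp_mulA grp_mulVg grp_mul1g. Qed.

Lemma grp_mulVKg g a : mul g (mul (inv g) a) = a.
Proof. by rewrite grp_mulA grp_mulgV grp_mul1g. Qed.

Lemma grp_invK g : inv (inv g) = g.
Proof. by rewrite -[inv (inv g)]grp_mulg1 -(grp_mulVg g) grp_mulKg. Qed.

Lemma grp_invMg g h : mul (inv (mul g h)) g = inv h.
Proof.
by rewrite -[X in X = _]grp_mulg1 -(grp_mulgV h) grp_mulA -(grp_mulA _ g)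
  grp_mulVg grp_mul1g.
Qed.

Lemma image_mulK g (C : set G) :
  [set mul (inv g) c | c in [set mul g c' | c' in C]] = C.
Proof.
apply/seteqP; split => u /=; first by case=> _ [c Cc <-] <-; rewrite grp_mulKg.
by move=> Cu; exists (mul g u); [exists u | rewrite grp_mulKg].
Qed.

Lemma infinite_image_mul g (C : set G) :
  infinite_set C -> infinite_set [set mul g c | c in C].
Proof.
by move=> Cinf /(finite_image (mul (inv g))); rewrite image_mulK.
Qed.

Lemma config_actK g (w : config G k) :
  config_act mul inv (inv g) (config_act mul inv g w) = w.
Proof.
by apply: funext => -[i u]; rewrite /config_act /= grp_invK grp_mulKg.
Qed.

Lemma connected_sym w u v :
  Defs.connected mul s w u v -> Defs.connected mul s w v u.
Proof.
elim=> [a b [i rab]|a|a b c _ Hab _ Hbc];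
  [|exact: rt_refl|exact: rt_trans Hbc Hab].
by apply: rt_step; exists i; case: rab; [right|left].
Qed.

Lemma cluster_eq w u v :
  Defs.connected mul s w u v -> Defs.cluster mul s w u = Defs.cluster mul s w v.
Proof.
move=> uv; apply/seteqP; split => z /=.
- exact: rt_trans (connected_sym uv).
- exact: rt_trans uv.
Qed.

Lemma connected_act h w u v : Defs.connected mul s w u v ->
  Defs.connected mul s (config_act mul inv h w) (mul h u) (mul h v).
Proof.
elim=> [a b [i rab]|a|a b c _ Hab _ Hbc];
  [|exact: rt_refl|exact: rt_trans Hab Hbc].
apply: rt_step; exists i; rewrite /config_act /= !grp_mulKg.
by case: rab => -[wi ->]; [left|right]; rewrite grp_mulA.
Qed.

Lemma cluster_act h w v :
  [set mul h c | c in Defs.cluster mul s w v] =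
  Defs.cluster mul s (config_act mul inv h w) (mul h v).
Proof.
apply/seteqP; split => u /=; first by case=> c vc <-; exact: connected_act.
move=> /(connected_act (inv h)); rewrite config_actK grp_mulKg => vu.
by exists (mul (inv h) u); rewrite ?grp_mulVKg.
Qed.

End CayleyGraph.

Section ClusterRelation.
Variables (G : Type) (mul : G -> G -> G) (one : G) (inv : G -> G).
Hypothesis Ggrp : is_group mul one inv.
Variables (k : nat) (s : 'I_k -> G).
Variables (d : measure_display) (X : measurableType d) (R : realType).
Variables (nu : probability X R) (act : G -> X -> X) (pi : X -> config G k).
Hypothesis act_pmp : pmp_action mul one nu act.
Hypothesis pi_borel : borel_config_map pi.
Hypothesis pi_equiv : equivariant mul inv act pi.
Variable e : nat -> option G.
Hypothesis e_onto : enumerates e.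

Local Notation conn := (Defs.connected mul s).
Local Notation cl := (Defs.cluster mul s).
Local Notation U := (Uinf mul one s pi).
Local Notation Cinfty := (Cinf mul s pi).
Local Notation pact := (pair_act mul act).
Local Notation pairT := (g_sigma_algebraType (@pair_gen d X G)).

Let act1 x : act one x = x. Proof. by case: act_pmp. Qed.
Let actM g h x : act (mul g h) x = act g (act h x).
Proof. by case: act_pmp. Qed.

Lemma act_invK g x : act (inv g) (act g x) = x.
Proof. by rewrite -actM (grp_mulVg Ggrp) act1. Qed.

Lemma act_invMK g h x : act (inv (mul g h)) (act g x) = act (inv h) x.
Proof. by rewrite -actM (grp_invMg Ggrp). Qed.

Lemma measurable_act_preimage g (A : set X) :
  measurable A -> measurable (act g @^-1` A).
Proof.
move=> mA; case: act_pmp => _ _ mact _.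
by rewrite -[_ @^-1` _]setTI; exact: mact.
Qed.

Lemma negligible_act_preimage g (S : set X) :
  nu.-negligible S -> nu.-negligible (act g @^-1` S).
Proof.
case=> N [mN N0 SN]; exists (act g @^-1` N); split => //.
- exact: measurable_act_preimage.
- by case: act_pmp => _ _ _ ->.
- by move=> x /SN.
Qed.

Definition saturation (B : set X) : set X := [set x | exists g, B (act g x)].

Lemma sub_saturation B : B `<=` saturation B.
Proof. by move=> x Bx; exists one; rewrite act1. Qed.

Lemma saturation_act B g x : saturation B x -> saturation B (act g x).
Proof. by case=> h Bhx; exists (mul h (inv g)); rewrite actM act_invK. Qed.

Lemma measurable_saturation B : measurable B -> measurable (saturation B).
Proof.
by move=> mB; apply: (measurable_exists e_onto) => g;
  exact: measurable_act_preimage.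
Qed.

Lemma negligible_saturation B :
  nu.-negligible B -> nu.-negligible (saturation B).
Proof.
by move=> nB; apply: (negligible_exists e_onto) => g;
  exact: negligible_act_preimage.
Qed.

Lemma cluster_equivariant h x v :
  [set mul h c | c in cl (pi x) v] = cl (pi (act h x)) (mul h v).
Proof. by rewrite (cluster_act Ggrp) pi_equiv. Qed.

Lemma measurable_connected u v : measurable [set x | conn (pi x) u v].
Proof.
apply: (measurable_clos_refl_trans _ _ e_onto) => a b.
apply: (measurable_exists (@unpickle_enumerates _)) => i.
apply: (@measurableU _ _ [set x | pi x (i, a) /\ b = mul a (s i)]
                        [set x | pi x (i, b) /\ a = mul b (s i)]);
  by apply: measurableI; [exact: pi_borel|exact: measurable_const_prop].
Qed.

Definition root_cluster (x : X) : X * set G := (x, cl (pi x) one).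

Lemma root_cluster_act x v :
  root_cluster (act (inv v) x) = pact (inv v) (x, cl (pi x) v).
Proof. by rewrite /pair_act /= cluster_equivariant (grp_mulVg Ggrp). Qed.

Lemma Uinf_root_cluster x : U x <-> Cinfty (root_cluster x).
Proof. by split=> [Ux|[v [_ Cinf_v]]]; first by exists one. Qed.

Lemma Cinf_act g p : Cinfty p -> Cinfty (pact g p).
Proof.
case: p => x _ [v [/= -> Cinf_v]]; exists (mul g v); split.
- exact: cluster_equivariant.
- exact: (infinite_image_mul Ggrp).
Qed.

Lemma pair_actK g p : pact (inv g) (pact g p) = p.
Proof. by case: p => x C; rewrite /pair_act /= act_invK (image_mulK Ggrp). Qed.

Lemma pair_act_invariant (S : set (X * set G)) :
  (forall g p, S p -> S (pact g p)) -> forall g p, S p <-> S (pact g p).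
Proof.
move=> Sact g p; split; first exact: Sact.
by move/(Sact (inv g)); rewrite pair_actK.
Qed.

Lemma Rcl_sym x y :
  Rcl mul one inv s act pi x y -> Rcl mul one inv s act pi y x.
Proof.
case=> g [<- conn_g]; exists (inv g); split.
  by rewrite (grp_invK Ggrp) -actM (grp_mulgV Ggrp) act1.
apply: connected_sym; have := connected_act Ggrp (inv g) conn_g.
by rewrite (grp_mulVg Ggrp) (grp_mulg1 Ggrp) pi_equiv.
Qed.

Lemma Rcl_root_cluster x y : Rcl mul one inv s act pi x y ->
  exists g, root_cluster y = pact g (root_cluster x).
Proof.
case=> g [<- conn_g]; exists (inv g).
by rewrite root_cluster_act -(cluster_eq conn_g).
Qed.

Lemma exists_cluster_sub_saturation (S : set (X * set G)) :
  S `<=` Cinfty -> (forall g p, S p -> S (pact g p)) ->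
  [set x | exists C, S (x, C)] `<=` saturation (root_cluster @^-1` S).
Proof.
move=> SC Sact x [C SxC]; have [v [/= Cv _]] := SC _ SxC.
by exists (inv v); rewrite /preimage /= root_cluster_act -Cv; exact: Sact.
Qed.

Lemma measurable_fst_preimage (A : set X) :
  measurable A -> measurable [set p : pairT | A p.1].
Proof. by move=> mA; apply: sub_sigma_algebra; left; exists A. Qed.

Lemma measurable_mem_snd u : measurable [set p : pairT | p.2 u].
Proof. by apply: sub_sigma_algebra; right; exists u. Qed.

Lemma measurable_root_cluster : measurable_fun setT (root_cluster : X -> pairT).
Proof.
apply: (@measurability _ _ X pairT setT root_cluster (@pair_gen d X G) erefl).
move=> _ [S [[A [mA ->]]|[u ->]] <-]; rewrite setTI; first exact: mA.
exact: measurable_connected.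
Qed.

Lemma measurable_snd_cluster g :
  measurable [set p : pairT | p.2 = cl (pi p.1) g].
Proof.
have -> : [set p : pairT | p.2 = cl (pi p.1) g] =
    [set p | forall u, p.2 u <-> conn (pi p.1) g u].
  apply/seteqP; split=> -[x C] /=; first by move=> ->.
  by move=> CE; apply/seteqP; split=> u /CE.
apply: (measurable_forall e_onto) => u.
apply: measurable_iff; first exact: measurable_mem_snd.
exact: (measurable_fst_preimage (measurable_connected g u)).
Qed.

Lemma indistinguishable_of_ergodic :
  Rcl_restricted_ergodic mul one inv s nu act pi ->
  indistinguishable mul s nu act pi.
Proof.
move=> erg A AC mA Ainv.
pose B := root_cluster @^-1` A.
have mB : measurable B.
  by rewrite -[B]setTI; exact: measurable_root_cluster.
have BU : B `<=` U by move=> x /AC; rewrite -Uinf_root_cluster.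
have UB : root_cluster @^-1` (Cinfty `\` A) = U `\` B.
  by apply/seteqP; split=> x [Cx nAx]; split => //; exact/Uinf_root_cluster.
have Binv x y : B x -> U x -> U y -> Rcl mul one inv s act pi x y -> B y.
  by move=> Bx _ _ /Rcl_root_cluster [g yE]; rewrite /B /preimage /= yE -Ainv.
have bad_sub : [set x | (exists C, A (x, C)) /\
                        (exists C', (Cinfty `\` A) (x, C'))] `<=`
               saturation B `&` saturation (U `\` B).
  move=> x [inA inCA]; split.
    exact: (exists_cluster_sub_saturation AC (fun g p => (Ainv g p).1) inA).
  rewrite -UB; apply: (exists_cluster_sub_saturation _ _ inCA).
    by move=> p [].
  move=> g p [Cp nAp].
  by split; [exact: Cinf_act | rewrite -Ainv].
have [B0|UB0] := erg B mB BU Binv.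
- have nB : nu.-negligible B by exists B; split.
  by apply: negligibleS (negligible_saturation nB) => x /bad_sub [].
- by apply: negligibleS (negligible_saturation UB0) => x /bad_sub [].
Qed.

Definition marked_clusters (B : set X) : set (X * set G) :=
  [set p | exists g, p.2 = cl (pi p.1) g /\ B (act (inv g) p.1)].

Lemma marked_clusters_act B g p :
  marked_clusters B p -> marked_clusters B (pact g p).
Proof.
case: p => x _ [h [/= -> Bhx]]; exists (mul g h); split.
- exact: cluster_equivariant.
- by rewrite act_invMK.
Qed.

Lemma marked_clusters_sub_Cinf B : B `<=` U -> marked_clusters B `<=` Cinfty.
Proof.
move=> BU [x _] [g [/= -> /BU /Uinf_root_cluster]].
rewrite root_cluster_act => /(Cinf_act g).
by rewrite -{1}(grp_invK Ggrp g) pair_actK.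
Qed.

Lemma measurable_marked_clusters B :
  measurable B -> pair_borel (marked_clusters B).
Proof.
move=> mB; apply: (measurable_exists e_onto (T := pairT)) => g.
apply: measurableI; first exact: measurable_snd_cluster.
exact: measurable_fst_preimage (measurable_act_preimage _ mB).
Qed.

Lemma ergodic_of_indistinguishable :
  ergodic_action nu act -> indistinguishable mul s nu act pi ->
  Rcl_restricted_ergodic mul one inv s nu act pi.
Proof.
move=> erg indist B mB BU Binv.
have bad := indist _ (marked_clusters_sub_Cinf BU)
  (measurable_marked_clusters mB) (pair_act_invariant (@marked_clusters_act B)).
have [W0|nW0] := erg _ (measurable_saturation mB) (@saturation_act B).
  left; apply: subset_measure0 W0 => //; last exact: sub_saturation.
  exact: measurable_saturation.
have nW : nu.-negligible (~` saturation B).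
  exists (~` saturation B); split => //.
  exact/measurableC/measurable_saturation.
right; apply: negligibleS (negligibleU nW bad).
move=> x [Ux nBx]; have [/= [g Bgx]|] := pselect (saturation B x); last by left.
right; split.
  by exists (cl (pi x) (inv g)), (inv g); rewrite (grp_invK Ggrp).
exists (cl (pi x) one); split; first exact/Uinf_root_cluster.
case=> h [/= clE Bhx]; apply: nBx.
have Rxy : Rcl mul one inv s act pi x (act (inv h) x).
  exists h; split => //.
  by have : cl (pi x) h h := rt_refl _ _ _; rewrite -clE.
exact: Binv _ _ Bhx (BU _ Bhx) Ux (Rcl_sym Rxy).
Qed.

End ClusterRelation.

Theorem mainTheorem5
  (G : Type) (mul : G -> G -> G) (one : G) (inv : G -> G)
  (k : nat) (s : 'I_k -> G)
  (d : measure_display) (X : measurableType d) (R : realType)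
  (nu : probability X R) (act : G -> X -> X) (pi : X -> config G k) :
  is_group mul one inv ->
  generates mul one inv s ->
  standard_borel X R ->
  pmp_action mul one nu act ->
  essentially_free one nu act ->
  ergodic_action nu act ->
  borel_config_map pi ->
  equivariant mul inv act pi ->
  ~ nu.-negligible (Uinf mul one s pi) ->
  (Rcl_restricted_ergodic mul one inv s nu act pi <->
   indistinguishable mul s nu act pi).
Proof.
move=> Ggrp gen _ act_pmp _ erg pi_borel pi_equiv _.
have [e e_onto] := generates_enumerable gen.
split.
  exact: (indistinguishable_of_ergodic Ggrp act_pmp pi_borel pi_equiv e_onto).
exact: (ergodic_of_indistinguishable Ggrp act_pmp pi_borel pi_equiv e_onto).
Qed.
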